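(* Let $w\in\{a,b\}^*$ (with $a\ne b$) satisfy $l(w)=8$. Then every element of $\mathtt{BR}(w)$ is rich if and only if $w\in\{abababab,\ babababa\}$.
   Context: For a word $w=w_1\cdots w_n$, $|w|=n$, $w^R=w_n\cdots w_1$; $w$ is a palindrome if $w=w^R$; a factor of $w$ is a word $u$ with $w=puq$. A word $w$ is rich if the number of distinct nonempty palindromic factors of $w$ equals $|w|$. The block reversal of a nonempty word $w$ is $\mathtt{BR}(w)=\{B_t\cdots B_1 : w=B_1\cdots B_t,\ t\ge1,\ \text{each } B_i \text{ nonempty}\}$. Every nonempty word has a unique run-length encoding $w=c_1^{n_1}\cdots c_k^{n_k}$ with letters $c_i\neq c_{i+1}$, $n_i\ge1$; $l(w)=k$. *)

From mathcomp Require Import all_boot.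
Set Implicit Arguments. Unset Strict Implicit. Unset Printing Implicit Defensive.

Section Words.
Variable T : eqType.

Definition palindrome (w : seq T) : bool := rev w == w.

Definition factors (w : seq T) : seq (seq T) :=
  undup [seq drop i (take j w) | i <- iota 0 (size w).+1, j <- iota 0 (size w).+1].

Definition pal_factors (w : seq T) : seq (seq T) :=
  [seq u <- factors w | (u != [::]) && palindrome u].

Definition rich (w : seq T) : Prop := size (pal_factors w) = size w.

Definition in_BR (w v : seq T) : Prop :=
  exists bs : seq (seq T),
    [/\ bs != [::], all (fun B => B != [::]) bs, flatten bs = w & v = flatten (rev bs)].

Fixpoint rle (w : seq T) : seq (T * nat) :=
  match w with
  | [::] => [::]
  | x :: w' =>
      match rle w' with
      | (c, n) :: r => if c == x then (c, n.+1) :: r else (x, 1) :: (c, n) :: r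
      | [::] => [:: (x, 1)]
      end
  end.

Definition runs (w : seq T) : nat := size (rle w).

End Words.

Example rle_ex : runs [:: 1; 1; 2; 1; 3; 3]%N = 4. Proof. by []. Qed.
Example rich_ex : rich [:: 0; 1; 0; 0]%N. Proof. by []. Qed.
Example nrich_ex : ~ rich [:: 0; 0; 1; 1; 0; 1; 0; 0]%N. Proof. by []. Qed.

From mathcomp Require Import all_boot.
Set Implicit Arguments. Unset Strict Implicit. Unset Printing Implicit Defensive.

(* Write w = c^n1 d^n2 ... d^n8 with {c, d} = {a, b}.  If all n_i = 1, w is
   (ab)^4 or (ba)^4, and its 2^7 block reversals are checked to be rich.
   Otherwise one of thirteen patterns of exponents applies: each keeps one or
   two letters at the ends of some runs and treats the rest of every run as an
   arbitrary pad, and cutting w into suitable blocks makes the reversal contain,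
   away from all pads, a short non-rich factor such as aababbaa.  Richness is
   inherited by factors because appending a letter creates at most one new
   palindromic factor. *)

Section Palindromes.
Variable T : eqType.
Implicit Types u w z : seq T.

Lemma mem_factors u w : (u \in factors w) = infix u w.
Proof.
rewrite /factors mem_undup; apply/allpairsP/infixP => [[[i j] /= [_ _ ->]] | [p [s ->]]].
  by exists (take i (take j w)), (drop j w); rewrite catA !cat_take_drop.
exists (size p, size p + size u); rewrite !mem_iota !size_cat /= !add0n !ltnS.
by rewrite leq_addr addnA leq_addr catA take_size_cat ?size_cat // drop_size_cat.
Qed.

Lemma mem_pal_factors u w :
  (u \in pal_factors w) = [&& u != [::], palindrome u & infix u w].
Proof. by rewrite mem_filter mem_factors andbA. Qed.

Lemma uniq_pal_factors w : uniq (pal_factors w).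
Proof. exact/filter_uniq/undup_uniq. Qed.

Lemma size_pal_factors_rev w : size (pal_factors (rev w)) = size (pal_factors w).
Proof.
apply/perm_size/uniq_perm; rewrite ?uniq_pal_factors // => u.
rewrite !mem_pal_factors -infix_revLR.
by case: (palindrome u) / eqP => [-> | ]; rewrite ?andbF.
Qed.

Lemma prefix_of_prefixes u1 u2 w :
  prefix u1 w -> prefix u2 w -> size u1 <= size u2 -> prefix u1 u2.
Proof. by rewrite !prefixE => /eqP E1 /eqP E2 le12; rewrite -E2 take_takel // E1. Qed.

Lemma suffix_of_suffixes u1 u2 w :
  suffix u1 w -> suffix u2 w -> size u1 <= size u2 -> suffix u1 u2.
Proof.
rewrite -!prefix_rev -(size_rev u1) -(size_rev u2); exact: prefix_of_prefixes.
Qed.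

(* Of two palindromic suffixes, the shorter is also a prefix of the longer
   one, hence occurs before the last letter. *)
Lemma new_pal_factor_unique w x z1 z2 :
  z1 \in pal_factors (rcons w x) -> z1 \notin pal_factors w ->
  z2 \in pal_factors (rcons w x) -> z2 \notin pal_factors w -> z1 = z2.
Proof.
have new_suffix z : z \in pal_factors (rcons w x) -> z \notin pal_factors w ->
    [/\ z != [::], palindrome z & suffix z (rcons w x)].
  by rewrite !mem_pal_factors infix_rconsl => /and3P [-> -> /orP [|->]].
wlog le12 : z1 z2 / size z1 <= size z2.
  move=> wlog z1P z1_new z2P z2_new.
  have [le12 | /ltnW le21] := leqP (size z1) (size z2); first exact: wlog.
  exact/esym/wlog.
move=> z1P z1_new z2P z2_new.
have [nz1 pal1 suf1] := new_suffix _ z1P z1_new.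
have [_ pal2 suf2] := new_suffix _ z2P z2_new.
have /prefixP [t def_z2] : prefix z1 z2.
  rewrite -(eqP pal1) -(eqP pal2) prefix_rev.
  exact: suffix_of_suffixes suf1 suf2 le12.
case/lastP: t def_z2 => [|t y] def_z2; first by rewrite def_z2 cats0.
move: suf2; rewrite def_z2 -rcons_cat suffix_rcons => /andP [_ /suffixW /catr_infix z1w].
by move: z1_new; rewrite mem_pal_factors nz1 pal1 z1w.
Qed.

Lemma size_pal_factors_rcons w x :
  size (pal_factors (rcons w x)) <= (size (pal_factors w)).+1.
Proof.
set fresh := [seq z <- pal_factors (rcons w x) | z \notin pal_factors w].
have freshP y : y \in pal_factors (rcons w x) -> y \notin pal_factors w -> y \in fresh.
  by move=> y_pal y_new; rewrite mem_filter y_new.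
case E: fresh freshP => [|z ?] freshP.
  apply/leqW/uniq_leq_size; first exact: uniq_pal_factors.
  by move=> y y_pal; apply/negPn/negP => /(freshP _ y_pal).
have : z \in fresh by rewrite E mem_head.
rewrite mem_filter => /andP [z_new z_pal].
apply: (uniq_leq_size (s2 := z :: pal_factors w)); first exact: uniq_pal_factors.
move=> y y_pal; rewrite in_cons.
have [_ | y_new] := boolP (y \in pal_factors w); first by rewrite orbT.
by rewrite (new_pal_factor_unique y_pal y_new z_pal z_new) eqxx.
Qed.

Lemma size_pal_factors_cat w z :
  size (pal_factors (w ++ z)) <= size (pal_factors w) + size z.
Proof.
elim/last_ind: z => [|z x IHz]; first by rewrite cats0 addn0.
by rewrite -rcons_cat size_rcons addnS (leq_trans (size_pal_factors_rcons _ _)).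
Qed.

Lemma size_pal_factors w : size (pal_factors w) <= size w.
Proof. exact: size_pal_factors_cat [::] w. Qed.

Definition richb w := size (pal_factors w) == size w.

Lemma richP w : reflect (rich w) (richb w).
Proof. exact: eqP. Qed.

Lemma rich_catl w z : rich (w ++ z) -> rich w.
Proof.
rewrite /rich => rich_wz; apply/eqP; rewrite eqn_leq size_pal_factors /=.
by rewrite -(leq_add2r (size z)) -size_cat -rich_wz size_pal_factors_cat.
Qed.

Lemma rich_rev w : rich (rev w) <-> rich w.
Proof. by rewrite /rich size_pal_factors_rev size_rev. Qed.

Lemma rich_infix u w : infix u w -> rich w -> rich u.
Proof.
case/infixP=> p [s ->]; rewrite catA => /rich_catl /rich_rev.
by rewrite rev_cat => /rich_catl /rich_rev.
Qed.

End Palindromes.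

Section BlockReversals.
Variable T : eqType.
Implicit Types (u v w : seq T) (bs : seq (seq T)).

Lemma in_BR_blocks bs : flatten bs != [::] -> in_BR (flatten bs) (flatten (rev bs)).
Proof.
have flatten_nonempty cs : flatten [seq B <- cs | B != [::]] = flatten cs.
  by elim: cs => //= -[|x B] cs /= ->.
move=> nz; exists [seq B <- bs | B != [::]]; split.
- by apply: contraNneq nz => E; rewrite -flatten_nonempty E.
- exact: filter_all.
- exact: flatten_nonempty.
- by rewrite -filter_rev flatten_nonempty.
Qed.

Fixpoint compositions w : seq (seq (seq T)) :=
  if w is x :: w' then
    [seq [:: x] :: bs | bs <- compositions w'] ++
    [seq (x :: head [::] bs) :: behead bs | bs <- compositions w']
  else [:: [::]].

Lemma mem_compositions w bs :
  all (fun B => B != [::]) bs -> flatten bs = w -> bs \in compositions w.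
Proof.
elim: w bs => [|x w IHw] [|[|y B] bs] //= nz_bs [<- def_w]; rewrite mem_cat.
apply/orP; case: B def_w => [|z B] def_w; first by left; apply/map_f/IHw.
by right; apply/mapP; exists ((z :: B) :: bs); rewrite ?IHw.
Qed.

Definition block_reversals w := [seq flatten (rev bs) | bs <- compositions w].

Lemma in_BR_block_reversals w v : in_BR w v -> v \in block_reversals w.
Proof. by case=> bs [_ nz_bs def_w ->]; apply/map_f/mem_compositions. Qed.

End BlockReversals.

Section Maps.
Variables (S T : eqType) (f : S -> T).

Lemma in_BR_map u v : in_BR u v -> in_BR (map f u) (map f v).
Proof.
case=> bs [nil_bs nz_bs <- ->]; exists (map (map f) bs); split.
- by case: bs nil_bs nz_bs.
- by rewrite all_map; apply/sub_all: nz_bs => -[].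
- by rewrite map_flatten.
- by rewrite map_flatten map_rev.
Qed.

Lemma compositions_map u : compositions (map f u) = map (map (map f)) (compositions u).
Proof.
elim: u => //= x u ->; rewrite map_cat -!map_comp.
by congr (_ ++ _); apply: eq_map => -[|B bs].
Qed.

Lemma block_reversals_map u :
  block_reversals (map f u) = map (map f) (block_reversals u).
Proof.
rewrite /block_reversals compositions_map -!map_comp.
by apply: eq_map => bs /=; rewrite map_flatten map_rev.
Qed.

Hypothesis f_inj : injective f.

Lemma pal_factors_map u : pal_factors (map f u) = map (map f) (pal_factors u).
Proof.
rewrite /pal_factors /factors size_map.
have -> : [seq drop i (take j (map f u)) | i <- iota 0 (size u).+1, j <- iota 0 (size u).+1]
   = map (map f) [seq drop i (take j u) | i <- iota 0 (size u).+1, j <- iota 0 (size u).+1].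
  by rewrite map_allpairs; apply: eq_allpairs => i j; rewrite map_drop map_take.
rewrite undup_map_inj; last exact: inj_map.
rewrite filter_map; congr map; apply: eq_filter => z /=.
by rewrite /palindrome -map_rev (inj_eq (inj_map f_inj)); case: z.
Qed.

Lemma rich_map u : rich (map f u) <-> rich u.
Proof. by rewrite /rich pal_factors_map !size_map. Qed.

Lemma rle_map u : rle (map f u) = [seq (f q.1, q.2) | q <- rle u].
Proof.
elim: u => //= x u ->; case: (rle u) => [|[c n] r] //=.
by rewrite (inj_eq f_inj); case: eqP.
Qed.

Lemma runs_map u : runs (map f u) = runs u.
Proof. by rewrite /runs rle_map size_map. Qed.

End Maps.

Fixpoint runword (x : bool) (ns : seq nat) : seq bool :=
  if ns is n :: ns' then nseq n x ++ runword (~~ x) ns' else [::].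

Lemma runword_negb x ns : runword (~~ x) ns = map negb (runword x ns).
Proof. by elim: ns x => //= n ns IHns x; rewrite map_cat map_nseq IHns. Qed.

Lemma rle_runword (u : seq bool) :
  u = runword (head (true, 0) (rle u)).1 [seq q.2 | q <- rle u].
Proof.
elim: u => //= y u; case: (rle u) => [|[c n] r] /= def_u; first by rewrite def_u.
case: eqP => [<- | /eqP c_ny] /=; first by rewrite def_u.
by rewrite def_u; case: c y c_ny {def_u} => [] [].
Qed.

Lemma rle_count_gt0 (u : seq bool) : all (fun n => 0 < n) [seq q.2 | q <- rle u].
Proof.
elim: u => //= y u; case: (rle u) => [|[c n] r] //= /andP [n_gt0 r_gt0].
by case: eqP; rewrite /= ?n_gt0 r_gt0.
Qed.

(* [Pad k l] describes a run of at least [k + l] letters, written as [k]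
   letters, a pad holding the remaining ones, and [l] letters. *)
Inductive run_spec := Exact of nat | Pad of nat & nat.

Definition fits (n : nat) (s : run_spec) : bool :=
  match s with Exact k => n == k | Pad k l => k + l <= n end.

Definition spec_letters (s : run_spec) : nat :=
  match s with Exact k => k | Pad k l => k + l end.

(* A template symbol is a letter [inl y] or the pad [inr i] of the [i]-th run. *)
Definition run_template (x : bool) (i : nat) (s : run_spec) : seq (bool + nat) :=
  match s with
  | Exact k => nseq k (inl x)
  | Pad k l => nseq k (inl x) ++ inr i :: nseq l (inl x)
  end.

Fixpoint template (x : bool) (i : nat) (ss : seq run_spec) : seq (bool + nat) :=
  if ss is s :: ss' then run_template x i s ++ template (~~ x) i.+1 ss' else [::].

Definition expand (p : nat -> seq bool) (t : seq (bool + nat)) : seq bool :=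
  flatten [seq match z with inl y => [:: y] | inr i => p i end | z <- t].

Lemma expand_cat p t1 t2 : expand p (t1 ++ t2) = expand p t1 ++ expand p t2.
Proof. by rewrite /expand map_cat flatten_cat. Qed.

Lemma expand_flatten p ts : expand p (flatten ts) = flatten (map (expand p) ts).
Proof. by elim: ts => //= t ts IHts; rewrite expand_cat IHts. Qed.

Lemma expand_letters p u : expand p (map inl u) = u.
Proof. by rewrite /expand -map_comp flatten_seq1. Qed.

Lemma expand_template x i ss ns p : all2 fits ns ss ->
    (forall j, j < size ss ->
       p (i + j) = nseq (nth 0 ns j - spec_letters (nth (Exact 0) ss j)) (x (+) odd j)) ->
  expand p (template x i ss) = runword x ns.
Proof.
elim: ss x i ns => [|s ss IHss] x i [|n ns] //= /andP [fit_n fit_ns] pE.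
rewrite expand_cat (IHss (~~ x) i.+1 ns) //; last first.
  by move=> j lt_j; rewrite addSnnS pE //= addbN addNb.
congr (_ ++ _); have := pE 0 isT; rewrite addn0 addbF.
case: s fit_n {pE} => [k /eqP -> | k l le_kl] /= pi; first by rewrite -map_nseq expand_letters.
rewrite expand_cat -cat1s expand_cat -!map_nseq !expand_letters /expand /= cats0 pi.
by rewrite -!nseqD (addnC _ l) addnA subnKC.
Qed.

Lemma template_expands x ss ns : all2 fits ns ss ->
  exists p, expand p (template x 0 ss) = runword x ns.
Proof.
move=> fit_ns.
exists (fun j => nseq (nth 0 ns j - spec_letters (nth (Exact 0) ss j)) (x (+) odd j)).
exact: expand_template.
Qed.

(* A rule cuts the template into blocks of the given sizes; reversing their
   order creates, away from every pad, the given non-rich factor. *)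
Record rule := Rule {
  rule_specs : seq run_spec; rule_blocks : seq nat; rule_factor : seq bool }.

Definition rule_template (r : rule) := template true 0 (rule_specs r).

Definition rule_reversal (r : rule) :=
  flatten (rev (reshape (rule_blocks r) (rule_template r))).

Definition rule_valid (r : rule) :=
  [&& size (rule_template r) <= sumn (rule_blocks r),
      infix (map inl (rule_factor r)) (rule_reversal r) & ~~ richb (rule_factor r)].

Lemma rule_valid_nonrich r p : rule_valid r ->
  exists v, in_BR (expand p (rule_template r)) v /\ ~ rich v.
Proof.
case/and3P=> blocks_cover factor_in nonrich.
set bs := map (expand p) (reshape (rule_blocks r) (rule_template r)).
have def_w : expand p (rule_template r) = flatten bs.
  by rewrite -expand_flatten reshapeKr.
have factor_v : infix (rule_factor r) (flatten (rev bs)).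
  case/infixP: factor_in => t1 [t2 def_t].
  rewrite -map_rev -expand_flatten -/(rule_reversal r) def_t !expand_cat expand_letters.
  exact: infix_infix.
exists (flatten (rev bs)); split; last by move/(rich_infix factor_v)/richP; apply/negP.
rewrite def_w; apply: in_BR_blocks.
rewrite -size_eq0 !size_flatten -sumn_rev -map_rev -size_flatten size_eq0.
by apply: contraNneq nonrich => nil_v; move: factor_v; rewrite nil_v infixs0 => /eqP ->.
Qed.

Definition rules : seq rule := [::
  Rule [:: Pad 0 1; Pad 1 0; Pad 0 1; Exact 1; Pad 1 0; Pad 0 1; Exact 1; Pad 2 0]
       [:: 1; 4; 2; 1; 6; 1]
       [:: false; true; false; false; true; true; false; true; false];
  Rule [:: Pad 0 1; Pad 0 1; Pad 0 1; Exact 1; Exact 1; Pad 1 0; Pad 0 2; Pad 1 0]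
       [:: 1; 4; 1; 3; 5; 1]
       [:: true; true; false; false; true; false; true; true];
  Rule [:: Pad 0 1; Pad 0 1; Pad 0 1; Exact 1; Pad 1 0; Pad 0 2; Exact 1; Pad 1 0]
       [:: 3; 2; 2; 1; 6; 1]
       [:: false; false; true; false; true; true; false; false];
  Rule [:: Pad 0 1; Pad 0 1; Pad 1 0; Pad 0 1; Pad 0 2; Exact 1; Exact 1; Pad 1 0]
       [:: 1; 2; 2; 9; 1]
       [:: true; true; false; true; false; false; true; true];
  Rule [:: Pad 0 1; Pad 0 1; Pad 0 1; Exact 1; Pad 2 0; Pad 0 1; Pad 0 2; Pad 1 0]
       [:: 5; 6; 1; 4; 1]
       [:: true; true; false; false; true; false; true; true];
  Rule [:: Pad 0 1; Pad 0 1; Exact 1; Pad 2 0; Pad 0 1; Exact 1; Pad 1 0; Pad 0 1]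
       [:: 3; 6; 1; 2; 3]
       [:: false; false; true; true; false; true; false; false];
  Rule [:: Pad 0 1; Pad 0 1; Pad 0 1; Pad 2 0; Pad 0 1; Pad 0 2; Exact 1; Pad 1 0]
       [:: 5; 5; 1; 5; 1]
       [:: false; false; true; false; true; true; false; false];
  Rule [:: Pad 0 1; Pad 0 1; Pad 0 1; Pad 2 0; Pad 0 1; Pad 0 2; Pad 2 0; Pad 0 1]
       [:: 5; 7; 1; 3; 3]
       [:: false; false; true; true; false; true; false; false];
  Rule [:: Pad 0 1; Exact 1; Pad 1 1; Pad 1 0; Pad 0 1; Exact 1; Exact 1; Pad 1 0]
       [:: 1; 4; 1; 1; 6; 1]
       [:: true; false; true; false; false; true; true; false; true];
  Rule [:: Pad 0 1; Pad 0 1; Pad 0 1; Pad 0 2; Exact 1; Exact 1; Pad 2 0; Pad 0 1]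
       [:: 3; 4; 1; 5; 3]
       [:: false; false; true; false; true; true; false; false];
  Rule [:: Pad 0 1; Pad 0 1; Pad 0 1; Pad 0 2; Pad 2 0; Pad 0 1; Pad 0 2; Pad 1 0]
       [:: 1; 6; 3; 1; 7; 1]
       [:: true; true; false; true; false; false; true; true];
  Rule [:: Pad 0 1; Pad 2 0; Pad 0 1; Pad 0 1; Exact 1; Exact 1; Pad 1 0; Pad 0 1]
       [:: 1; 7; 4; 3]
       [:: false; false; true; false; true; true; false; false];
  Rule [:: Pad 0 2; Pad 0 1; Exact 1; Exact 1; Exact 1; Pad 1 0; Pad 0 1; Pad 0 1]
       [:: 1; 3; 1; 4; 3; 2]
       [:: true; true; false; true; false; false; true; true]
].

Lemma rules_valid : all rule_valid rules.
Proof. by vm_compute. Qed.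

Lemma rules_cover ns :
  size ns == 8 -> all (fun n => 0 < n) ns -> ns != nseq 8 1 ->
  has (fun r => all2 fits ns (rule_specs r)) rules.
Proof. by move: ns; do 8 (case=> [|[|[|?]] ns] //=; move: ns); case. Qed.

Lemma runword_nonrich_BR x ns :
  size ns == 8 -> all (fun n => 0 < n) ns -> ns != nseq 8 1 ->
  exists v, in_BR (runword x ns) v /\ ~ rich v.
Proof.
move=> size_ns pos_ns ns_ne1; wlog -> : x / x = true.
  move=> wlog; case: x; first exact: wlog.
  have [v [BR_v nonrich_v]] := wlog true erefl.
  exists (map negb v); rewrite (runword_negb true); split; first exact: in_BR_map.
  by move/(rich_map negb_inj).
have [r [fit_ns valid_r]] : exists r, all2 fits ns (rule_specs r) /\ rule_valid r.
  move: rules_valid (rules_cover size_ns pos_ns ns_ne1); elim: rules => //= r rs IHrs.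
  by case/andP=> valid_r /IHrs valid_rs /orP [fit_ns | /valid_rs]; first by exists r.
have [p <-] := template_expands true fit_ns.
exact: rule_valid_nonrich.
Qed.

Definition bit (T : Type) (c d : T) (y : bool) : T := if y then c else d.

Lemma bit_inj (T : eqType) (c d : T) : c != d -> injective (bit c d).
Proof. by move=> ne_cd [] [] // /eqP; rewrite ?(negPf ne_cd) // eq_sym (negPf ne_cd). Qed.

Lemma alternating_BR_rich (T : eqType) (c d : T) v : c != d ->
  in_BR [:: c; d; c; d; c; d; c; d] v -> rich v.
Proof.
move=> ne_cd.
rewrite -[[:: c; _; _; _; _; _; _; _]]/(map (bit c d) (runword true (nseq 8 1))).
move/in_BR_block_reversals; rewrite block_reversals_map => /mapP [u BR_u ->].
apply/(rich_map (bit_inj ne_cd))/richP; move: u BR_u.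
by apply/allP; vm_compute.
Qed.

Theorem mainTheorem8 (T : eqType) (a b : T) (hab : a != b) (w : seq T)
  (hw : all (fun x => (x == a) || (x == b)) w) (hl : runs w = 8) :
  (forall v, in_BR w v -> rich v) <->
  (w = [:: a; b; a; b; a; b; a; b] \/ w = [:: b; a; b; a; b; a; b; a]).
Proof.
pose u := [seq x == a | x <- w].
have def_w : w = map (bit a b) u.
  rewrite -map_comp -[LHS]map_id; apply/eq_in_map => x /(allP hw) /=.
  by rewrite /bit; case: eqP => [-> | _ /eqP].
have def_u := rle_runword u; set x := (_ _).1 in def_u; set ns := map _ _ in def_u.
have size_ns : size ns == 8.
  by rewrite size_map -[size _]/(runs u) -(runs_map (bit_inj hab)) -def_w hl.
split=> [all_rich | [] -> v]; last 2 first.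
- exact: alternating_BR_rich.
- by apply: alternating_BR_rich; rewrite eq_sym.
have [ns1 | ns_ne1] := eqVneq ns (nseq 8 1).
  by rewrite def_w def_u ns1; case: (x); [left | right].
have [v [BR_v nonrich_v]] := runword_nonrich_BR x size_ns (rle_count_gt0 u) ns_ne1.
case: nonrich_v; apply/(rich_map (bit_inj hab))/all_rich.
by rewrite def_w def_u; apply: in_BR_map.
Qed.
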